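(* Let $q$ be a prime power, $1\le\ell\le m$, $k=\binom{m}{\ell}$, and $n=\left[{m\atop \ell}\right]_q$. Then $d_s(C(\ell,m))=n-g_s(\ell,m)$ for $s=1,\dots,k$.
   Context: Let $V=\mathbb F_q^m$ with fixed basis $e_1,\dots,e_m$; identify $\bigwedge^mV$ with $\mathbb F_q$ via $e_1\wedge\cdots\wedge e_m=1$. Fix representatives $\omega'_1,\dots,\omega'_n\in\bigwedge^{\ell}V$, $\omega'_i=v_1\wedge\cdots\wedge v_\ell$ for a basis of the $i$-th $\ell$-dimensional subspace of $V$ (one for each such subspace), and let $T(\ell,m)=\{\omega'_1,\dots,\omega'_n\}$. The Grassmann code $C(\ell,m)$ is the image of the injective map $\tau:\bigwedge^{m-\ell}V\to\mathbb F_q^n$, $\tau(\omega)=(\omega'_1\wedge\omega,\dots,\omega'_n\wedge\omega)$. For a subspace $\mathcal E$ of $\bigwedge^{\ell}V$, $g(\mathcal E)=|\mathcal E\cap T(\ell,m)|$, and $g_s(\ell,m)=\max\{g(\mathcal E):\mathcal E\text{ a subspace of }\bigwedge^\ell V\text{ of codimension }s\}$. For a code $C$, $d_r(C)=\min\{\|D\|: D\subseteq C\text{ subspace},\ \dim D=r\}$, where $\|D\|$ is the number of coordinates $i$ such that $x_i\neq0$ for some $x\in D$. *)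

From HB Require Import structures.
From mathcomp Require Import all_boot all_order all_algebra.
Set Implicit Arguments. Unset Strict Implicit. Unset Printing Implicit Defensive.
Import GRing.Theory.
Local Open Scope ring_scope.

(* Grassmann codes C(l,m) over a finite field F (q = #|F|), V = F^m as 'rV[F]_m. *)

(* Strictly increasing maps 'I_l -> 'I_m : index the standard basis
   e_f = e_{f 0} /\ ... /\ e_{f (l-1)} of /\^l V. *)
Definition incr (l m : nat) :=
  {f : {ffun 'I_l -> 'I_m} | [forall i : 'I_l, forall j : 'I_l, (i < j)%N ==> (f i < f j)%N]}.

(* /\^l V is modelled by 'rV[F]_(#|incr l m|), coordinates w.r.t. the basis e_f. *)
Notation ext F l m := 'rV[F]_#|{: incr l m}|.

Definition coord (F : fieldType) l m (w : ext F l m) (f : incr l m) : F :=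
  w 0 (enum_rank f).

(* v_1 /\ ... /\ v_l for the rows v_i of M : its coordinates are the maximal minors *)
Definition wedge_rows (F : fieldType) l m (M : 'M[F]_(l, m)) : ext F l m :=
  \row_(i < #|{: incr l m}|) \det (colsub (val (enum_val i)) M).

(* e_f /\ e_g in /\^m V = F, identified via e_1 /\ ... /\ e_m = 1 *)
Definition wedge_basis (F : fieldType) l m (f : incr l m) (g : incr (m - l) m) : F :=
  \det (conform_mx (0 : 'M[F]_m)
          (col_mx (rowsub (val f) (1%:M : 'M[F]_m)) (rowsub (val g) (1%:M : 'M[F]_m)))).

Definition wedge (F : fieldType) l m (a : ext F l m) (b : ext F (m - l) m) : F :=
  \sum_(f : incr l m) \sum_(g : incr (m - l) m) coord a f * coord b g * wedge_basis F f g.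

(* the l-dimensional subspaces of V, each represented canonically by <<U>> *)
Definition grass (F : finFieldType) l m : {set 'M[F]_m} :=
  [set U : 'M[F]_m | (\rank U == l) && (<<U>>%MS == U)].

(* B U is a chosen basis (as rows) of U; omega'_U = wedge_rows (B U) *)
Definition Tset (F : finFieldType) l m (B : 'M[F]_m -> 'M[F]_(l, m)) : {set ext F l m} :=
  [set wedge_rows (B U) | U in grass F l m].

Definition tau (F : finFieldType) l m (B : 'M[F]_m -> 'M[F]_(l, m)) (w : ext F (m - l) m)
  : 'rV[F]_#|grass F l m| :=
  \row_i wedge (wedge_rows (B (enum_val i))) w.

Definition grassmann_code (F : finFieldType) l m (B : 'M[F]_m -> 'M[F]_(l, m))
  : {set 'rV[F]_#|grass F l m|} :=
  [set tau B w | w : ext F (m - l) m].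

(* g(E) and g_s(l,m); subspaces of /\^l V are row spaces of square matrices *)
Definition gE (F : finFieldType) l m (B : 'M[F]_m -> 'M[F]_(l, m))
  (E : 'M[F]_#|{: incr l m}|) : nat :=
  #|[set w in Tset B | (w <= E)%MS]|.

Definition g_s (F : finFieldType) l m (B : 'M[F]_m -> 'M[F]_(l, m)) (s : nat) : nat :=
  \max_(E : 'M[F]_#|{: incr l m}| | \rank E == (#|{: incr l m}| - s)%N) gE B E.

Definition supp_size (F : finFieldType) n (D : 'M[F]_n) : nat :=
  #|[set i : 'I_n | [exists x : 'rV[F]_n, (x <= D)%MS && (x 0 i != 0)]]|.

Definition dr (F : finFieldType) n (C : {set 'rV[F]_n}) (r : nat) : nat :=
  \big[minn/n]_(D : 'M[F]_n | (\rank D == r) &&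
                 [forall x : 'rV[F]_n, (x <= D)%MS ==> (x \in C)]) supp_size D.

From Pilot Require Import Defs.
From mathcomp Require Import all_boot all_order all_algebra all_fingroup zify ring.
Set Implicit Arguments. Unset Strict Implicit. Unset Printing Implicit Defensive.
Import GRing.Theory.

(* The code is the row space of [T^T], where the rows of [T] are the Plücker
   vectors omega'_U, provided the wedge pairing between /\^l V and /\^(m-l) V is
   perfect (its matrix in the bases e_f, e_g is a signed permutation matrix).
   Writing an s-dimensional subcode as [Y *m T^T], the coordinate of U vanishes
   on it iff omega'_U lies in the kernel of [Y^T], a subspace of codimension s,
   and every subspace of codimension s is such a kernel.  So the support of the
   subcode is n minus the number of omega'_U in a codimension-s subspace, and
   minimising gives n - g_s.  Two facts about Plücker vectors make the count
   correct: the omega'_U span /\^l V (coordinate subspaces give the basis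
   vectors e_f), and U is determined by omega'_U (a basis normalised so that a
   nonsingular maximal minor is the identity has maximal minors as entries). *)

Section IncreasingMaps.
Variables l m : nat.
Implicit Type f : incr l m.

Let ltn_ord_trans : transitive (fun x y : 'I_m => (x < y)%N) :=
  fun y x z => @ltn_trans y x z.

Lemma incr_lt f (i j : 'I_l) : (i < j)%N -> (val f i < val f j)%N.
Proof. by case: f => f /= /forallP /(_ i) /forallP /(_ j) /implyP. Qed.

Lemma incr_ltE f (i j : 'I_l) : (val f i < val f j)%N = (i < j)%N.
Proof.
apply/idP/idP => [|/incr_lt//]; apply: contraTT; rewrite -!leqNgt leq_eqVlt.
by case/orP => [/eqP/val_inj-> // | /(incr_lt f)/ltnW].
Qed.

Lemma incr_inj f : injective (val f).
Proof.
move=> i j eij; apply: val_inj.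
by case: (ltngtP i j) => // /(incr_lt f); rewrite eij ltnn.
Qed.

Lemma incr_sorted f : sorted (fun x y : 'I_m => (x < y)%N) (codom (val f)).
Proof.
have := iota_ltn_sorted 0 l; rewrite -val_enum_ord sorted_map /codom /image_mem.
by rewrite sorted_map enumT; apply: sub_sorted => i j; rewrite /= incr_ltE.
Qed.

Definition incr_img f : {set 'I_m} := [set x in codom (val f)].

Lemma card_incr_img f : #|incr_img f| = l.
Proof. by rewrite cardsE card_codom ?card_ord //; apply: incr_inj. Qed.

Lemma incr_img_inj : injective incr_img.
Proof.
move=> f g /setP efg; apply/val_inj/ffunP.
suff /eq_in_map eqfg : codom (val f) = codom (val g).
  by move=> i; apply: eqfg; rewrite mem_enum.
apply: (irr_sorted_eq ltn_ord_trans (fun x => ltnn x) (incr_sorted f) (incr_sorted g)).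
by move=> x; have := efg x; rewrite !inE.
Qed.

Lemma incr_img_surj (S : {set 'I_m}) : #|S| = l -> exists f, incr_img f = S.
Proof.
move=> cS; pose h (i : 'I_l) : 'I_m := enum_val (cast_ord (esym cS) i).
have S_sorted : sorted (fun x y : 'I_m => (x < y)%N) (enum S).
  rewrite /enum_mem -enumT /=; apply: sorted_filter; first exact: ltn_trans.
  by have := iota_ltn_sorted 0 m; rewrite -val_enum_ord sorted_map.
have h_incr : [forall i : 'I_l, forall j : 'I_l,
                 (i < j)%N ==> ([ffun i => h i] i < [ffun i => h i] j)%N].
  apply/forallP => i; apply/forallP => j; apply/implyP => ij; rewrite !ffunE.
  have x0 : 'I_m by exact: h i.
  rewrite /h !(enum_val_nth x0); apply: (sorted_ltn_nth ltn_ord_trans) => //.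
  1,2: by rewrite inE -cardE /= cS.
exists (exist _ [ffun i => h i] h_incr).
apply/eqP; rewrite eqEcard card_incr_img cS leqnn andbT.
by apply/subsetP => x; rewrite inE => /codomP[i ->]; rewrite /= ffunE enum_valP.
Qed.

Lemma card_incr : #|{: incr l m}| = 'C(m, l).
Proof.
rewrite -[m in 'C(m, _)]card_ord -card_draws -(card_imset _ incr_img_inj).
apply: eq_card => S; rewrite !inE; apply/imsetP/eqP => [[f _ ->]|/incr_img_surj[f <-]].
  exact: card_incr_img.
by exists f.
Qed.

Lemma incr_perm_factor (k : 'I_l -> 'I_m) : injective k ->
  exists (g : incr l m) (s : {perm 'I_l}), forall a, k a = val g (s a).
Proof.
move=> k_inj; have [g img_g] : exists g, incr_img g = [set k a | a : 'I_l].
  by apply: incr_img_surj; rewrite card_imset ?card_ord.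
have /all_sig[sg sgE] : forall a, {b | k a = val g b}.
  move=> a; apply: sig_eqW; have : k a \in incr_img g by rewrite img_g imset_f.
  by rewrite inE => /codomP.
have sg_inj : injective sg by move=> a b eab; apply: k_inj; rewrite !sgE eab.
by exists g, (perm sg_inj) => a; rewrite permE.
Qed.
End IncreasingMaps.

Local Open Scope ring_scope.

Section PluckerVector.
Variable F : fieldType.

Lemma det_col_eq0 n (A : 'M[F]_n) j : (forall i, A i j = 0) -> \det A = 0.
Proof.
by move=> Aj0; rewrite (expand_det_col _ j) big1 // => i _; rewrite Aj0 mul0r.
Qed.

Lemma det_eq_cols n (A : 'M[F]_n) j1 j2 :
  j1 != j2 -> (forall i, A i j1 = A i j2) -> \det A = 0.
Proof.
move=> nj eqA; rewrite -det_tr; apply: (determinant_alternate nj) => i.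
by rewrite !mxE.
Qed.

Lemma det_id_except_col n (A : 'M[F]_n) j :
  (forall i k, k != j -> A i k = (i == k)%:R) -> \det A = A j j.
Proof.
move=> A1; rewrite (expand_det_col _ j) (bigD1 j) //= big1 ?addr0 => [|i nij].
  rewrite /cofactor addnn -signr_odd odd_double expr0 mul1r.
  suff -> : row' j (col' j A) = 1%:M by rewrite det1 mulr1.
  apply/matrixP => i k; rewrite !mxE A1; last by rewrite eq_sym neq_lift.
  by rewrite (inj_eq (@lift_inj _ j)).
have [k ->|eij] := unliftP j i; last by rewrite eij eqxx in nij.
rewrite /cofactor (@det_col_eq0 _ _ k) ?mulr0 // => i'.
rewrite !mxE A1; last by rewrite eq_sym neq_lift.
by rewrite eq_sym (negPf (neq_lift _ _)).
Qed.

Variables l m : nat.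

Lemma wedge_rowsM (A : 'M[F]_l) (M : 'M[F]_(l, m)) :
  wedge_rows (A *m M) = \det A *: wedge_rows M.
Proof. by apply/rowP => i; rewrite !mxE -mulmx_colsub det_mulmx. Qed.

Lemma wedge_rows_rowsub1 (f : incr l m) :
  wedge_rows (rowsub (val f) (1%:M : 'M[F]_m)) = delta_mx 0 (enum_rank f).
Proof.
apply/rowP => i; rewrite !mxE /=; have [->|nif] := eqVneq i (enum_rank f).
  suff -> : colsub (val (enum_val (enum_rank f))) (rowsub (val f) (1%:M : 'M[F]_m))
             = 1%:M :> 'M[F]_l.
    by rewrite det1.
  by apply/matrixP => a b; rewrite enum_rankK !mxE (inj_eq (@incr_inj _ _ f)).
have : ~~ (incr_img (enum_val i) \subset incr_img f).
  apply: contra nif => sub; rewrite -(enum_valK i); apply/eqP; congr enum_rank.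
  apply: incr_img_inj; apply/eqP.
  by rewrite eqEcard sub !card_incr_img leqnn.
case/subsetPn => x; rewrite inE => /codomP[b ->]; rewrite inE => nfb.
apply: (@det_col_eq0 _ _ b) => a; rewrite !mxE.
by case: eqP => // eab; rewrite -eab codom_f in nfb.
Qed.

Lemma wedge_rows_minor (M M' : 'M[F]_(l, m)) : wedge_rows M = wedge_rows M' ->
  forall k : 'I_l -> 'I_m, \det (colsub k M) = \det (colsub k M').
Proof.
move=> eqM k; have [/injectiveP k_inj|] := boolP (injectiveb k); last first.
  case/injectivePn => a [b nab kab].
  by rewrite !(det_eq_cols nab) // => i; rewrite !mxE kab.
have [g [s ks]] := incr_perm_factor k_inj.
have minor_perm (A : 'M[F]_(l, m)) :
    \det (colsub k A) = \det (colsub (val g) A) * (-1) ^+ (s^-1)%g.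
  have -> : colsub k A = colsub (val g) A *m perm_mx s^-1.
    by rewrite -col_permE; apply/matrixP => i j; rewrite !mxE ks.
  by rewrite det_mulmx det_perm.
rewrite !minor_perm; congr (_ * _).
by move/rowP: eqM => /(_ (enum_rank g)); rewrite !mxE enum_rankK.
Qed.

Lemma rank_unit_minor (M : 'M[F]_(l, m)) : \rank M = l ->
  exists k : 'I_l -> 'I_m, colsub k M \in unitmx.
Proof.
move=> rM; have Mt_full : row_full M^T by rewrite /row_full mxrank_tr rM.
exists (fullrankfun Mt_full); rewrite -unitmx_tr.
have -> : (colsub (fullrankfun Mt_full) M)^T = rowsub (fullrankfun Mt_full) M^T.
  by apply/matrixP => i j; rewrite !mxE.
exact: fullrowsub_unit.
Qed.

Lemma entry_minor (Q : 'M[F]_(l, m)) (k : 'I_l -> 'I_m) : colsub k Q = 1%:M ->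
  forall i j, Q i j = \det (colsub (fun c => if c == i then j else k c) Q).
Proof.
move=> Qk1 i j; rewrite (@det_id_except_col _ _ i) => [|r c nci].
  by rewrite !mxE eqxx.
by rewrite !mxE (negPf nci); have /matrixP/(_ r c) := Qk1; rewrite !mxE.
Qed.

Lemma wedge_rows_inj (M M' : 'M[F]_(l, m)) : \rank M = l ->
  wedge_rows M = wedge_rows M' -> (M == M')%MS.
Proof.
move=> rM eqM; have [k Mk_unit] := rank_unit_minor rM.
have minorM := wedge_rows_minor eqM.
have M'k_unit : colsub k M' \in unitmx by rewrite unitmxE -minorM -unitmxE.
pose N := invmx (colsub k M) *m M; pose N' := invmx (colsub k M') *m M'.
have eqNM : (N :=: M)%MS by apply: eqmxMfull; rewrite row_full_unit unitmx_inv.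
have eqN'M' : (N' :=: M')%MS by apply: eqmxMfull; rewrite row_full_unit unitmx_inv.
have Nk1 : colsub k N = 1%:M by rewrite -mulmx_colsub mulVmx.
have N'k1 : colsub k N' = 1%:M by rewrite -mulmx_colsub mulVmx.
suff eqN : N = N'.
  by apply/eqmxP; apply: eqmx_trans (eqmx_sym eqNM) _; rewrite eqN.
apply/matrixP => i j; rewrite (entry_minor Nk1) (entry_minor N'k1).
by rewrite -!mulmx_colsub !det_mulmx !det_inv !minorM.
Qed.
End PluckerVector.

Section WedgeBasis.
Variable F : fieldType.

Lemma sqr_det_rowsub1 n (h : 'I_n -> 'I_n) :
  \det (rowsub h (1%:M : 'M[F]_n)) ^+ 2 = (injectiveb h)%:R.
Proof.
have [/injectiveP h_inj|/injectivePn[a [b nab hab]]] := boolP (injectiveb h).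
  have -> : rowsub h 1%:M = (perm_mx (perm h_inj) : 'M[F]_n).
    by apply/matrixP => i j; rewrite !mxE permE.
  by rewrite det_perm sqrr_sign.
by rewrite (determinant_alternate nab) ?expr0n // => j; rewrite !mxE hab.
Qed.

Variables l m : nat.
Hypothesis lm : (l <= m)%N.
Implicit Types (f : incr l m) (g : incr (m - l) m).

Let lm_split : (l + (m - l))%N = m := subnKC lm.

Definition incr_cat f g (i : 'I_m) : 'I_m :=
  match split (cast_ord (esym lm_split) i) with inl a => val f a | inr b => val g b end.

Lemma wedge_basisE f g :
  wedge_basis F f g = \det (rowsub (incr_cat f g) (1%:M : 'M[F]_m)).
Proof.
rewrite /wedge_basis -(conform_castmx (lm_split, erefl m)) conform_mx_id.
congr (\det _); apply/matrixP => i j; rewrite castmxE !mxE /= cast_ord_id /incr_cat.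
by case: split => a; rewrite !mxE.
Qed.

Lemma incr_cat_img f g : [set incr_cat f g i | i : 'I_m] = incr_img f :|: incr_img g.
Proof.
apply/setP => x; rewrite !inE; apply/imsetP/orP => [[i _ ->]|[]/codomP[a ->]].
- by rewrite /incr_cat; case: split => a; [left|right]; exact: codom_f.
- exists (cast_ord lm_split (lshift (m - l) a)) => //.
  by rewrite /incr_cat cast_ordK (unsplitK (inl _ a)).
- exists (cast_ord lm_split (rshift l a)) => //.
  by rewrite /incr_cat cast_ordK (unsplitK (inr _ a)).
Qed.

Definition complementary f g := [disjoint incr_img f & incr_img g].

Lemma injectiveb_incr_cat f g : injectiveb (incr_cat f g) = complementary f g.
Proof.
have card_cat :
    #|[set incr_cat f g i | i : 'I_m]| = (m - #|incr_img f :&: incr_img g|)%N.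
  by rewrite incr_cat_img cardsU !card_incr_img subnKC.
have := subset_leq_card (subsetT (incr_img f :&: incr_img g)).
rewrite cardsT card_ord => card_cap.
apply/injectiveP/idP => [cat_inj|fg_disj].
  have := card_imset (mem 'I_m) cat_inj; rewrite card_cat card_ord => card_m.
  by rewrite /complementary -setI_eq0 -cards_eq0; apply/eqP; lia.
have := @imset_injP _ _ (incr_cat f g) (mem 'I_m).
rewrite card_cat card_ord (disjoint_setI0 fg_disj) cards0 subn0 eqxx.
move=> /(_ isT) cat_inj.
by move=> x y; apply: cat_inj.
Qed.

Lemma complementaryE f g : complementary f g = (incr_img g == ~: incr_img f).
Proof.
apply/idP/eqP => [fg_disj|img_g]; last first.
  by rewrite /complementary img_g disjoints_subset setCK.
apply/eqP; rewrite eqEcard -disjoints_subset disjoint_sym -/(complementary f g).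
rewrite fg_disj /=.
by rewrite cardsCs setCK !card_incr_img card_ord.
Qed.

Lemma wedge_basis_sqr f g : wedge_basis F f g ^+ 2 = (complementary f g)%:R.
Proof. by rewrite wedge_basisE sqr_det_rowsub1 injectiveb_incr_cat. Qed.

Lemma wedge_basis_eq0 f g : ~~ complementary f g -> wedge_basis F f g = 0.
Proof.
move=> not_compl; apply/eqP; rewrite -[_ == 0]/((0 < 2)%N && _) -expf_eq0.
by rewrite wedge_basis_sqr (negPf not_compl).
Qed.

Lemma complementary_uniq_l f f' g : complementary f g -> complementary f' g -> f = f'.
Proof.
rewrite !complementaryE => /eqP fg /eqP f'g; apply: incr_img_inj.
by rewrite -(setCK (incr_img f)) -(setCK (incr_img f')) -fg -f'g.
Qed.

Lemma complementary_uniq_r f g g' : complementary f g -> complementary f g' -> g = g'.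
Proof.
by rewrite !complementaryE => /eqP fg /eqP fg'; apply: incr_img_inj; rewrite fg fg'.
Qed.

Lemma complementary_exists_r f : exists g, complementary f g.
Proof.
have [g img_g] : exists g : incr (m - l) m, incr_img g = ~: incr_img f.
  by apply: incr_img_surj; rewrite cardsCs setCK card_incr_img card_ord.
by exists g; rewrite complementaryE img_g.
Qed.

Definition wedge_mx : 'M[F]_(#|{: incr l m}|, #|{: incr (m - l) m}|) :=
  \matrix_(i, j) wedge_basis F (enum_val i) (enum_val j).

Lemma wedge_mx_orthogonal : wedge_mx *m wedge_mx^T = 1%:M.
Proof.
apply/matrixP => i i'; rewrite !mxE.
have [g0 ig0] := complementary_exists_r (enum_val i).
rewrite (bigD1 (enum_rank g0)) //= big1 ?addr0 => [|j nj]; last first.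
  rewrite !mxE wedge_basis_eq0 ?mul0r //; apply: contra nj => ij.
  by rewrite (complementary_uniq_r ig0 ij) enum_valK.
rewrite !mxE enum_rankK; have [<-|ni] := eqVneq i i'.
  by rewrite -expr2 wedge_basis_sqr ig0.
rewrite [wedge_basis F (enum_val i') g0]wedge_basis_eq0 ?mulr0 ?(negPf ni) //.
by apply: contra ni => i'g0; apply/eqP/enum_val_inj/(complementary_uniq_l ig0 i'g0).
Qed.

Lemma row_full_tr_wedge_mx : row_full wedge_mx^T.
Proof. by apply/row_fullP; exists wedge_mx; apply: wedge_mx_orthogonal. Qed.
End WedgeBasis.

Lemma supp_size_eqmx (F : finFieldType) k n (D : 'M[F]_n) (D' : 'M[F]_(k, n)) :
  (D :=: D')%MS -> supp_size D = #|[set i | col i D' != 0]|.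
Proof.
move=> eqD; apply: eq_card => i; rewrite !inE.
apply/existsP/idP => [[x /andP[]]|nz].
  rewrite eqD => /submxP[y ->]; apply: contra => /eqP c0.
  rewrite !mxE big1 // => r _; have /colP/(_ r) := c0; rewrite !mxE => ->.
  by rewrite mulr0.
have /existsP[r nzr] : [exists r, D' r i != 0].
  apply: contraR nz => /existsPn zero; apply/eqP/colP => r; rewrite !mxE.
  exact/eqP/negbNE/zero.
by exists (row r D'); rewrite eqD row_sub mxE.
Qed.

Lemma dr_le_supp_size (F : finFieldType) n (C : {set 'rV[F]_n}) (D : 'M[F]_n) :
  (forall x, (x <= D)%MS -> x \in C) -> (dr C (\rank D) <= supp_size D)%N.
Proof.
move=> DC; pose P (D' : 'M[F]_n) := (\rank D' == \rank D) &&
                                   [forall x, (x <= D')%MS ==> (x \in C)].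
have PD : P D by rewrite /P eqxx; apply/forallP => x; apply/implyP/DC.
(* [minn] is convertible to the order-theoretic [min] on [nat]. *)
by have := @Order.TotalTheory.bigmin_le_cond _ nat _ n D P (@supp_size F n) PD.
Qed.

Section ProjectiveSystem.
Variables (F : finFieldType) (n N : nat) (T : 'M[F]_(n, N)).
Hypothesis T_full : row_full T.

Lemma col_mul_tr_eq0 k (Y : 'M[F]_(k, N)) i :
  (col i (Y *m T^T) == 0) = (row i T <= kermx Y^T)%MS.
Proof. by rewrite sub_kermx -trmx_eq0 tr_col trmx_mul trmxK row_mul. Qed.

Lemma card_nz_col_mul_tr k (Y : 'M[F]_(k, N)) :
  #|[set i | col i (Y *m T^T) != 0]| =
  (n - #|[set i | (row i T <= kermx Y^T)%MS]|)%N.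
Proof.
rewrite cardsCs card_ord; congr (_ - #|pred_of_set _|)%N.
by apply/setP => i; rewrite !inE negbK col_mul_tr_eq0.
Qed.

Lemma dr_row_span s : (s <= N)%N ->
  dr [set x : 'rV[F]_n | (x <= T^T)%MS] s =
  (n - \max_(E : 'M[F]_N | \rank E == (N - s)%N) #|[set i | (row i T <= E)%MS]|)%N.
Proof.
move=> le_sN; have Tt_free : row_free T^T by rewrite /row_free mxrank_tr.
apply/eqP; rewrite eqn_leq; apply/andP; split.
  have [|E rE ->] := @eq_bigmax_cond _ (fun E : 'M[F]_N => \rank E == (N - s)%N)
                       (fun E => #|[set i | (row i T <= E)%MS]|).
    apply/card_gt0P; exists (pid_mx (N - s)).
    by rewrite /in_mem /= rank_pid_mx ?leq_subr.
  pose Y := (cokermx E)^T; pose D := <<Y *m T^T>>%MS.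
  have rD : \rank D = s.
    by rewrite genmxE mxrankMfree // mxrank_tr mxrank_coker (eqP rE) subKn.
  apply: (@leq_trans (supp_size D)).
    rewrite -{1}rD; apply: dr_le_supp_size => x xD.
    by rewrite inE (submx_trans xD) // genmxE submxMl.
  rewrite (supp_size_eqmx (genmxE _)) card_nz_col_mul_tr trmxK.
  apply/eq_leq; congr (_ - #|pred_of_set _|)%N.
  by apply/setP => i; rewrite !inE sub_kermx -submxE.
rewrite /dr; apply: (big_ind (fun d => n - _ <= d)%N) => [|x y|D]; first exact: leq_subr.
  by rewrite leq_min => -> ->.
case/andP=> /eqP rD /forallP D_code.
have DT : (D <= T^T)%MS.
  apply/row_subP => r.
  by have := implyP (D_code (row r D)) (row_sub r D); rewrite inE.
pose Y := D *m pinvmx T^T; have YT : Y *m T^T = D by rewrite mulmxKpV.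
rewrite -YT (supp_size_eqmx (eqmx_refl _)) card_nz_col_mul_tr.
apply/leq_sub2l/leq_bigmax_cond.
by rewrite mxrank_ker mxrank_tr -(mxrankMfree _ Tt_free) YT rD.
Qed.
End ProjectiveSystem.

Section GrassmannCode.
Variables (F : finFieldType) (l m : nat).
Hypothesis lm : (l <= m)%N.
Variable B : 'M[F]_m -> 'M[F]_(l, m).
Hypothesis B_basis : forall U, U \in grass F l m -> (B U == U)%MS.

Lemma rank_basis_grass U : U \in grass F l m -> \rank (B U) = l.
Proof.
by move=> gU; rewrite (eqmx_rank (B_basis gU)); move: gU; rewrite inE => /andP[/eqP].
Qed.

Definition plucker_mx : 'M[F]_(#|grass F l m|, #|{: incr l m}|) :=
  \matrix_(i, j) wedge_rows (B (enum_val i)) 0 j.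

Lemma row_plucker_mx i : row i plucker_mx = wedge_rows (B (enum_val i)).
Proof. by apply/rowP => j; rewrite !mxE. Qed.

Lemma tau_plucker w : tau B w = w *m (wedge_mx F l m)^T *m plucker_mx^T.
Proof.
apply/rowP => i; rewrite !mxE /wedge big_enum_val.
under eq_bigr => f _ do rewrite big_enum_val.
apply: eq_bigr => k _; rewrite !mxE big_distrl /=; apply: eq_bigr => j _.
by rewrite /Defs.coord !mxE !enum_valK; ring.
Qed.

Lemma grassmann_codeE : grassmann_code B = [set x | (x <= plucker_mx^T)%MS].
Proof.
apply/setP => x; rewrite inE; apply/imsetP/idP => [[w _ ->]|xT].
  by rewrite tau_plucker submxMl.
pose y := x *m pinvmx plucker_mx^T.
exists (y *m pinvmx (wedge_mx F l m)^T) => //.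
by rewrite tau_plucker mulmxKpV ?mulmxKpV // submx_full // row_full_tr_wedge_mx.
Qed.

(* Each basis vector [e_f] is, up to a nonzero scalar, the Plücker vector of the
   coordinate subspace spanned by the [e_(f i)]. *)
Lemma row_full_plucker_mx : row_full plucker_mx.
Proof.
rewrite -sub1mx; apply/row_subP => i; rewrite row1; set f := enum_val i.
pose R := rowsub (val f) (1%:M : 'M[F]_m).
have R_free : row_free R.
  apply/row_freeP; exists R^T; apply/matrixP => a b; rewrite !mxE.
  rewrite (bigD1 (val f a)) //= big1 ?addr0 => [|c nc]; last first.
    by rewrite !mxE eq_sym (negPf nc) mul0r.
  by rewrite !mxE eqxx mul1r (inj_eq (@incr_inj _ _ f)) eq_sym.
have gR : <<R>>%MS \in grass F l m by rewrite inE mxrank_gen genmx_id eqxx andbT.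
pose X := B <<R>>%MS *m pinvmx R.
have XR : X *m R = B <<R>>%MS.
  by rewrite mulmxKpV // (eqmxP (B_basis gR)) genmxE.
have X_unit : X \in unitmx.
  by rewrite -row_free_unit /row_free -(mxrankMfree _ R_free) XR rank_basis_grass.
have : (wedge_rows (B <<R>>%MS) <= plucker_mx)%MS.
  by rewrite -(enum_rankK_in gR gR) -row_plucker_mx row_sub.
rewrite -XR wedge_rowsM wedge_rows_rowsub1 /f enum_valK.
move=> /(scalemx_sub (\det X)^-1).
by rewrite scalerA mulVf ?scale1r // -unitfE -unitmxE.
Qed.

Lemma plucker_inj : {in grass F l m &, injective (fun U => wedge_rows (B U))}.
Proof.
move=> U U' gU gU' /(wedge_rows_inj (rank_basis_grass gU)) BU.
have UU' : (U == U')%MS.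
  apply/eqmxP/(eqmx_trans (eqmx_sym (eqmxP (B_basis gU)))).
  exact: eqmx_trans (eqmxP BU) (eqmxP (B_basis gU')).
move: gU gU'; rewrite !inE => /andP[_ /eqP <-] /andP[_ /eqP <-].
exact/genmxP.
Qed.

Lemma gE_plucker E : gE B E = #|[set i | (row i plucker_mx <= E)%MS]|.
Proof.
rewrite /gE; have -> : [set w in Tset B | (w <= E)%MS] =
          [set wedge_rows (B (enum_val i)) | i in [set i | (row i plucker_mx <= E)%MS]].
  apply/setP => w; rewrite inE; apply/andP/imsetP => [[/imsetP[U gU ->] UE]|[i]].
    exists (enum_rank_in gU U); last by rewrite (enum_rankK_in gU gU).
    by rewrite inE row_plucker_mx (enum_rankK_in gU gU).
  rewrite inE row_plucker_mx => iE ->; split=> //.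
  by apply: imset_f; apply: enum_valP.
rewrite card_in_imset // => i j _ _.
by move/(plucker_inj (enum_valP i) (enum_valP j))/enum_val_inj.
Qed.
End GrassmannCode.

Theorem corollary5p2 (F : finFieldType) (l m : nat) (B : 'M[F]_m -> 'M[F]_(l, m)) :
  (1 <= l <= m)%N ->
  (forall U, U \in grass F l m -> (B U == U)%MS) ->
  forall s : nat, (1 <= s <= 'C(m, l))%N ->
  dr (grassmann_code B) s = (#|grass F l m| - g_s B s)%N.
Proof.
move=> /andP[_ lm] B_basis s /andP[_ le_sC].
rewrite grassmann_codeE // dr_row_span ?card_incr ?row_full_plucker_mx //.
by congr (_ - _)%N; apply: eq_bigr => E _; rewrite gE_plucker.
Qed.
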